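(* Let $w\in\mathcal T$ be a word of length $\ell$ and let $p_x,p_y$ be Gaussian integers with $\max\{\|p_x\|,\|p_y\|\}>\ell$. Then $I_{p_x,p_y}(w)$ is trivial.
   Context: For a Gaussian integer $p$, $\|p\|=\max\{|\mathrm{Re}\,p|,|\mathrm{Im}\,p|\}$. Let $F_2^{(a)},F_2^{(b)},F_2^{(c)}$ be free groups on $a_1,a_2$; $b_1,b_2$; $c_1,c_2$, let $\psi\colon F_2^{(a)}\times F_2^{(b)}\times F_2^{(c)}\to\mathbb Z^2$ send $a_i,b_i,c_i\mapsto e_i$, and $K=\ker\psi$, generated by $x_i=a_ic_i^{-1}$, $y_i=b_ic_i^{-1}$. $\mathcal T\subseteq F(x_1,x_2,y_1,y_2)$ is the set of elements representing the identity of $K$. $\mathrm{Conf}_2(X)=\{(z_1,z_2)\in X^2:z_1\ne z_2\}$. For Gaussian integers $p_x,p_y$ put $\hat p_x=p_x-(\tfrac13+\tfrac13 i)$, $\hat p_y=p_y+(\tfrac13+\tfrac13i)$. For $w\in\mathcal T$ given by a word of length $\ell$, define $\gamma_x,\gamma_y\colon[0,1]\to\mathbb C$ with $\gamma_x(0)=\hat p_x$, $\gamma_y(0)=\hat p_y$, linear on each $[(k-1)/\ell,k/\ell]$: if the $k$-th letter is $x_1^\delta$ (resp. $x_2^\delta$), $\delta=\pm1$, $\gamma_x$ moves by $\delta$ (resp. $i\delta$) and $\gamma_y$ is constant; if it is $y_1^\delta$ (resp. $y_2^\delta$), $\gamma_y$ moves by $-\delta$ (resp. $-i\delta$) and $\gamma_x$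 is constant. $(\gamma_x,\gamma_y)$ is a loop in $\mathrm{Conf}_2(\mathbb C\setminus\{0\})$ based at $(\hat p_x,\hat p_y)$, and $I_{p_x,p_y}(w)$ is its class in $\pi_1(\mathrm{Conf}_2(\mathbb C\setminus\{0\}),(\hat p_x,\hat p_y))$ (independent of the word chosen for $w$). *)

From HB Require Import structures.
From mathcomp Require Import all_boot all_order all_algebra.
From mathcomp Require Import all_classical all_reals all_analysis.
Set Implicit Arguments. Unset Strict Implicit. Unset Printing Implicit Defensive.
Import Order.TTheory GRing.Theory Num.Theory.
Import numFieldTopology.Exports numFieldNormedType.Exports.
Local Open Scope ring_scope.
Local Open Scope classical_set_scope.

(* A word in a free group on generators indexed by nat: a letter is (i, δ),
   δ = true meaning exponent +1, δ = false meaning exponent -1. *)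
Definition fletter := (nat * bool)%type.

Definition fpush (l : fletter) (s : seq fletter) : seq fletter :=
  match s with
  | l' :: s' => if (l'.1 == l.1) && (l'.2 == ~~ l.2) then s' else l :: s
  | [::] => [:: l]
  end.

Definition freduce (w : seq fletter) : seq fletter := foldr fpush [::] w.

Definition ftrivial (w : seq fletter) : Prop := freduce w = [::].

Inductive gen := gx1 | gx2 | gy1 | gy2.
Definition gen_eqb (a b : gen) : bool :=
  match a, b with
  | gx1, gx1 | gx2, gx2 | gy1, gy1 | gy2, gy2 => true | _, _ => false end.

Definition kword := seq (gen * bool)%type.

(* the three components of psi-restricted map F(x,y) -> F^(a) x F^(b) x F^(c),
   x_i |-> a_i c_i^-1, y_i |-> b_i c_i^-1 *)
Definition comp_a (g : gen * bool) : seq fletter :=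
  match g.1 with gx1 => [:: (1%N, g.2)] | gx2 => [:: (2%N, g.2)] | _ => [::] end.
Definition comp_b (g : gen * bool) : seq fletter :=
  match g.1 with gy1 => [:: (1%N, g.2)] | gy2 => [:: (2%N, g.2)] | _ => [::] end.
Definition comp_c (g : gen * bool) : seq fletter :=
  match g.1 with
  | gx1 | gy1 => [:: (1%N, ~~ g.2)] | gx2 | gy2 => [:: (2%N, ~~ g.2)] end.

(* w ∈ 𝒯 : the word represents the identity of K ⊆ F^(a) x F^(b) x F^(c) *)
Definition inT (w : kword) : Prop :=
  [/\ ftrivial (flatten (map comp_a w)),
      ftrivial (flatten (map comp_b w)) &
      ftrivial (flatten (map comp_c w))].

Definition gauss := (int * int)%type.
Definition gauss_norm (p : gauss) : nat := maxn `|p.1|%N `|p.2|%N.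

Section Loop.
Variable R : realType.

(* complex numbers modelled as R * R (real part, imaginary part) *)
Local Notation cplx := (R * R)%type.

Definition clamp01 (u : R) : R := Num.min 1 (Num.max 0 u).

Definition sgn (b : bool) : R := if b then 1 else -1.

Definition step_x (g : gen * bool) : cplx :=
  match g.1 with
  | gx1 => (sgn g.2, 0) | gx2 => (0, sgn g.2) | _ => (0, 0) end.
Definition step_y (g : gen * bool) : cplx :=
  match g.1 with
  | gy1 => (- sgn g.2, 0) | gy2 => (0, - sgn g.2) | _ => (0, 0) end.

Definition hat_x (p : gauss) : cplx := (p.1%:~R - 3^-1, p.2%:~R - 3^-1).
Definition hat_y (p : gauss) : cplx := (p.1%:~R + 3^-1, p.2%:~R + 3^-1).

(* The piecewise linear path starting at z0: on [(k-1)/l, k/l] it moves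
   linearly by the displacement of the k-th letter.  Written as
   z0 + sum_j clamp01(l t - j) * d_j. *)
Definition pl_path (step : gen * bool -> cplx) (w : kword) (z0 : cplx)
    (t : R) : cplx :=
  (z0.1 + \sum_(j < size w)
            clamp01 ((size w)%:R * t - j%:R) * (step (nth (gx1, true) w j)).1,
   z0.2 + \sum_(j < size w)
            clamp01 ((size w)%:R * t - j%:R) * (step (nth (gx1, true) w j)).2).

Definition gamma_x (w : kword) (px : gauss) : R -> cplx := pl_path step_x w (hat_x px).
Definition gamma_y (w : kword) (py : gauss) : R -> cplx := pl_path step_y w (hat_y py).

Definition loop_xy (w : kword) (px py : gauss) (t : R) : cplx * cplx :=
  (gamma_x w px t, gamma_y w py t).

Definition conf2_punct : set (cplx * cplx) :=
  [set z | z.1 != (0, 0) /\ z.2 != (0, 0) /\ z.1 != z.2].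

Definition I01 : set R := [set t | 0 <= t <= 1].

(* A loop gamma based at b in the subspace X represents the trivial element
   of pi_1(X, b): there is a based homotopy in X from gamma to the
   constant loop. *)
Definition trivial_in_pi1 (X : set (cplx * cplx)) (b : cplx * cplx)
    (gamma : R -> cplx * cplx) : Prop :=
  exists H : R * R -> cplx * cplx,
    [/\ {within I01 `*` I01, continuous H},
        (forall s t, I01 s -> I01 t -> X (H (s, t))),
        (forall s, I01 s -> H (s, 0) = gamma s /\ H (s, 1) = b) &
        (forall t, I01 t -> H (0, t) = b /\ H (1, t) = b)].

Definition I_trivial (w : kword) (px py : gauss) : Prop :=
  trivial_in_pi1 conf2_punct (hat_x px, hat_y py) (loop_xy w px py).

End Loop.

From HB Require Import structures.
From mathcomp Require Import all_boot all_order all_algebra.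
From mathcomp Require Import all_classical all_reals all_analysis.
From mathcomp Require Import ring lra zify.
Set Implicit Arguments. Unset Strict Implicit. Unset Printing Implicit Defensive.
Import Order.TTheory GRing.Theory Num.Theory.
Import numFieldTopology.Exports numFieldNormedType.Exports.
Local Open Scope ring_scope.

(* Say ||p_x|| > l.  The components of w in F^(b) and F^(c) are trivial, and the lattice
   paths they spell are gamma_y - hat p_y and (gamma_x - gamma_y) - (hat p_x - hat p_y).
   Each is contracted along the Cayley tree of F_2: the point reached after k letters is
   pulled back along the free reduction of the remaining suffix of the word.  Throughout,
   every point has an integer coordinate and norm at most l/2.  Since both coordinates of
   hat p_y and of hat p_x - hat p_y are 1/3 modulo 1, gamma_y never meets 0 nor gamma_x,
   while gamma_x stays within l of hat p_x, hence away from 0.  For ||p_y|| > l the same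
   argument runs with F^(a) and F^(c). *)

Definition finv (l : fletter) : fletter := (l.1, ~~ l.2).

Lemma fpushP l s : fpush l s = l :: s \/ s = finv l :: fpush l s.
Proof.
case: s => [|l' s'] /=; first by left.
case: ifP => [/andP [/eqP e1 /eqP e2] | _]; last by left.
by right; rewrite /finv -e1 -e2; case: l' {e1 e2}.
Qed.

Lemma size_fpush l s :
  size (fpush l s) = (size s).+1 \/ size s = (size (fpush l s)).+1.
Proof. by case: (fpushP l s) => [->|e]; [left | right; rewrite {1}e]. Qed.

Lemma size_freduce u : (size (freduce u) <= size u)%N.
Proof.
elim: u => [|l u IH] //=; case: (size_fpush l (freduce u)); lia.
Qed.

Lemma freduce_cat u v : freduce (u ++ v) = foldr fpush (freduce v) u.
Proof. by rewrite /freduce foldr_cat. Qed.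

Lemma size_foldr_fpush u s : (size s <= size (foldr fpush s u) + size u)%N.
Proof.
elim: u => [|l u IH] /=; first by rewrite addn0.
case: (size_fpush l (foldr fpush s u)); lia.
Qed.

Section ReducedSuffixes.
Variables (comp : gen * bool -> seq fletter) (w : kword).
Hypothesis comp_small : forall g, (size (comp g) <= 1)%N.

Definition word_image (u : kword) := flatten (map comp u).

Definition rsuffix k := freduce (word_image (drop k w)).

Local Notation letter k := (nth (gx1, true) w k).

Lemma size_word_image u : (size (word_image u) <= size u)%N.
Proof.
elim: u => [|g u IH] //=.
by rewrite /word_image /= size_cat -addn1 addnC leq_add.
Qed.

Lemma rsuffix_step k : (k < size w)%N ->
  [\/ comp (letter k) = [::] /\ rsuffix k = rsuffix k.+1,
      exists l, comp (letter k) = [:: l] /\ rsuffix k.+1 = finv l :: rsuffix k |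
      exists l, comp (letter k) = [:: l] /\ rsuffix k = l :: rsuffix k.+1].
Proof.
move=> lt_k; have -> : rsuffix k = foldr fpush (rsuffix k.+1) (comp (letter k)).
  by rewrite /rsuffix (drop_nth (gx1, true) lt_k) /word_image /= freduce_cat.
move: (comp_small (letter k)); case: (comp _) => [|l [|? ?]] //= _; first by constructor 1.
by case: (fpushP l (rsuffix k.+1)) => e; [constructor 3 | constructor 2]; exists l.
Qed.

Lemma rsuffix_size_end : rsuffix (size w) = [::].
Proof. by rewrite /rsuffix drop_size. Qed.

Hypothesis w_trivial : freduce (word_image w) = [::].

Lemma rsuffix0 : rsuffix 0 = [::].
Proof. by rewrite /rsuffix drop0. Qed.

Lemma size_rsuffix k : (2 * size (rsuffix k) <= size w)%N.
Proof.
have le_suffix : (size (rsuffix k) <= size w - k)%N.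
  by rewrite -size_drop (leq_trans (size_freduce _)) ?size_word_image.
have le_prefix : (size (rsuffix k) <= k)%N.
  have := size_foldr_fpush (word_image (take k w)) (rsuffix k).
  rewrite /rsuffix -freduce_cat /word_image -flatten_cat -map_cat cat_take_drop.
  rewrite -/(word_image w) w_trivial add0n => /leq_trans-> //.
  by rewrite (leq_trans (size_word_image _)) // size_take; case: ltnP.
lia.
Qed.

End ReducedSuffixes.

Section LatticeWalks.
Variable R : realType.
Local Notation cplx := (R * R)%type.
Implicit Types (x t m : R) (v : seq fletter).

Definition axis (i : nat) : cplx :=
  if i == 1%N then (1, 0) else if i == 2%N then (0, 1) else 0.

Definition lvec (l : fletter) : cplx := sgn R l.2 *: axis l.1.

Definition wvec (v : seq fletter) : cplx := \sum_(l <- v) lvec l.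

(* The point at arc length [m] on the lattice path spelling [v] from its last letter on. *)
Fixpoint walk (v : seq fletter) (m : R) : cplx :=
  if v is l :: v' then walk v' m + clamp01 (m - (size v')%:R) *: lvec l else 0.

Definition int_point (z : cplx) := z.1 \is a Num.int /\ z.2 \is a Num.int.

Definition on_grid (z : cplx) := z.1 \is a Num.int \/ z.2 \is a Num.int.

Lemma clamp01_le0 x : x <= 0 -> clamp01 x = 0.
Proof. by move=> x_le0; rewrite /clamp01 (max_idPl x_le0) (min_idPr ler01). Qed.

Lemma clamp01_ge1 x : 1 <= x -> clamp01 x = 1.
Proof. by move=> x_ge1; rewrite /clamp01 (max_idPr (le_trans ler01 x_ge1)) (min_idPl x_ge1). Qed.

Lemma clamp01_id x : 0 <= x <= 1 -> clamp01 x = x.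
Proof. by case/andP=> x_ge0 x_le1; rewrite /clamp01 (max_idPr x_ge0) (min_idPr x_le1). Qed.

Lemma clamp01_itv x : 0 <= clamp01 x <= 1.
Proof.
have [x_le0|x_gt0] := lerP x 0; first by rewrite clamp01_le0 // lexx ler01.
have [x_ge1|x_lt1] := lerP 1 x; first by rewrite clamp01_ge1 // ler01 lexx.
by rewrite clamp01_id (ltW x_gt0) (ltW x_lt1).
Qed.

Lemma sgn_negb b : sgn R (~~ b) = - sgn R b.
Proof. by case: b; rewrite /= ?opprK. Qed.

Lemma lvec_finv l : lvec (finv l) = - lvec l.
Proof. by rewrite /lvec sgn_negb scaleNr. Qed.

Lemma norm_lvec l : `|lvec l| <= 1.
Proof.
have norm_axis : `|axis l.1| <= 1.
  rewrite /axis; case: ifP => _; last case: ifP => _;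
  by rewrite ?normr0 ?ler01 // prod_normE /= normr0 normr1 ge_max ler01 lexx.
by rewrite normrZ; case: l.2; rewrite /= ?normrN normr1 mul1r.
Qed.

Lemma lvec_on_axis l : (lvec l).1 = 0 \/ (lvec l).2 = 0.
Proof.
by rewrite /lvec /axis; case: ifP => _; [|case: ifP => _]; rewrite /= scaler0; [right|left|left].
Qed.

Lemma int_pointD z u : int_point z -> int_point u -> int_point (z + u).
Proof. by move=> [z1 z2] [u1 u2]; split; rewrite /= rpredD. Qed.

Lemma int_pointN z : int_point z -> int_point (- z).
Proof. by move=> [z1 z2]; split; rewrite /= rpredN. Qed.

Lemma on_grid_addl u z : int_point u -> on_grid z -> on_grid (u + z).
Proof. by move=> [u1 u2] [z_int|z_int]; [left | right]; rewrite /= rpredD. Qed.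

Lemma lvec_int l : int_point (lvec l).
Proof.
have sgn_int : sgn R l.2 \is a Num.int by case: l.2; rewrite /= ?rpredN rpred1.
by rewrite /int_point /lvec /axis; case: ifP => _; [|case: ifP => _];
  rewrite /= ?scaler0 ?rpred0 // /GRing.scale /= mulr1.
Qed.

Lemma walk_cons_low l v m : m <= (size v)%:R -> walk (l :: v) m = walk v m.
Proof. by move=> le_m; rewrite /= clamp01_le0 ?scale0r ?addr0 // subr_le0. Qed.

Lemma walk_le0 v m : m <= 0 -> walk v m = 0.
Proof. by move=> m_le0; elim: v => [|l v IH] //; rewrite walk_cons_low ?(le_trans m_le0). Qed.

Lemma walk_full v m : (size v)%:R <= m -> walk v m = wvec v.
Proof.
elim: v => [|l v IH] /=; first by rewrite /wvec big_nil.
rewrite -natr1 => le_m; rewrite /wvec big_cons addrC -/(wvec v) IH; last lra.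
by rewrite clamp01_ge1 ?scale1r //; lra.
Qed.

Lemma walk_cons l v t : 0 <= t <= 1 ->
  walk (l :: v) ((size v)%:R + t) = wvec v + t *: lvec l.
Proof.
move=> /[dup] t01 /andP[t_ge0 _] /=; rewrite walk_full; last lra.
by rewrite [_ + t]addrC addrK clamp01_id.
Qed.

Lemma norm_wvec v : `|wvec v| <= (size v)%:R.
Proof.
rewrite /wvec; elim: v => [|l v IH]; first by rewrite big_nil normr0.
rewrite big_cons -natr1 addrC; apply: (le_trans (ler_normD _ _)).
by rewrite lerD ?norm_lvec.
Qed.

Lemma norm_walk v m : 0 <= m -> `|walk v m| <= m.
Proof.
move=> m_ge0; elim: v => [|l v IH]; first by rewrite normr0.
have [le_m|] := boolP (m <= (size v)%:R); first by rewrite walk_cons_low.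
rewrite -ltNge => lt_m.
rewrite /= walk_full; last exact: ltW.
apply: (le_trans (ler_normD _ _)).
have /andP[c_ge0 _] := clamp01_itv (m - (size v)%:R).
have c_le : clamp01 (m - (size v)%:R) <= m - (size v)%:R.
  by rewrite /clamp01 ge_min ge_max lexx andbT subr_ge0 (ltW lt_m) orbT.
rewrite normrZ ger0_norm //.
have := norm_wvec v; have := norm_lvec l; have := normr_ge0 (lvec l); nra.
Qed.

Lemma wvec_int v : int_point (wvec v).
Proof.
rewrite /wvec; elim: v => [|l v IH]; first by rewrite big_nil; split; rewrite rpred0.
by rewrite big_cons; apply: int_pointD (lvec_int l) IH.
Qed.

Lemma on_grid_add_axis (z u : cplx) c :
  int_point z -> u.1 = 0 \/ u.2 = 0 -> on_grid (z + c *: u).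
Proof.
by case: z u => [a b] [x y] [/= a_int b_int] [] ->; [left | right]; rewrite /= scaler0 addr0.
Qed.

Lemma walk_on_grid v m : on_grid (walk v m).
Proof.
elim: v => [|l v IH]; first by left; rewrite rpred0.
have [le_m|] := boolP (m <= (size v)%:R); first by rewrite walk_cons_low.
rewrite -ltNge => lt_m.
rewrite /= walk_full; last exact: ltW.
exact: on_grid_add_axis (wvec_int v) (lvec_on_axis l).
Qed.

Lemma on_gridN z : on_grid z -> on_grid (- z).
Proof. by case=> z_int; [left | right]; rewrite /= rpredN. Qed.

Lemma continuous_clamp01 (T : topologicalType) (f : T -> R) :
  continuous f -> continuous (fun y => clamp01 (f y)).
Proof.
move=> f_cont y; exact: (continuous_min (f := fun=> 1) (cvg_cst _)
  (continuous_max (f := fun=> 0) (cvg_cst _) (f_cont y))).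
Qed.

Lemma continuous_walk (T : topologicalType) v (f : T -> R) :
  continuous f -> continuous (fun y => walk v (f y)).
Proof.
move=> f_cont; elim: v => [|l v IH] /= y; first exact: cvg_cst.
apply: cvgD; first exact: IH.
apply: cvgZr_tmp; apply: (continuous_clamp01 (f := fun y => f y - _)) => {}y.
by apply: cvgB; [exact: f_cont | exact: cvg_cst].
Qed.

End LatticeWalks.

Section Telescope.
Variables (R : realType) (V : zmodType).

Lemma telescope_clamp01 (N k0 : nat) (f : nat -> R -> V) (p : nat -> V) (x : R) :
  (k0 < N)%N -> k0%:R <= x <= k0.+1%:R ->
  (forall k, (k < N)%N -> f k 0 = p k) -> (forall k, (k < N)%N -> f k 1 = p k.+1) ->
  \sum_(k < N) (f k (clamp01 (x - k%:R)) - p k) = f k0 (x - k0%:R) - p 0%N.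
Proof.
move=> lt_k0 /andP[k0_le_x x_le_k0S] f0 f1.
rewrite -(big_mkord xpredT (fun k => f k (clamp01 (x - k%:R)) - p k)).
rewrite (big_cat_nat (leq0n k0) (ltnW lt_k0)) (big_ltn lt_k0) /=.
have -> : \sum_(0 <= k < k0) (f k (clamp01 (x - k%:R)) - p k) = p k0 - p 0%N.
  rewrite -telescope_sumr //; apply: eq_big_nat => k /andP[_ lt_k].
  rewrite clamp01_ge1 ?f1 ?(ltn_trans lt_k) //.
  by rewrite lerBrDl (le_trans _ k0_le_x) // natr1 ler_nat.
rewrite clamp01_id; last by rewrite subr_ge0 k0_le_x lerBlDl natr1.
rewrite big_nat_cond big1 ?addr0 => [|k /andP[/andP[lt_k0k lt_kN] _]].
  by rewrite addrCA addrAC subrr add0r.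
by rewrite clamp01_le0 ?f0 ?subrr // subr_le0 (le_trans x_le_k0S) // ler_nat.
Qed.
End Telescope.

Lemma unit_segment_cover (R : realType) (x : R) (N : nat) : 0 <= x <= N.+1%:R ->
  exists2 k, (k <= N)%N & k%:R <= x <= k.+1%:R.
Proof.
elim: N => [|N IH] x_itv; first by exists 0%N.
have [le_x|lt_x] := boolP (x <= N.+1%:R).
  by have [|k le_kN] := IH; [rewrite le_x (andP x_itv).1 | exists k; rewrite // leqW].
by exists N.+1; rewrite // (andP x_itv).2 ltW // ltNge.
Qed.

Section Contraction.
Variables (R : realType) (comp : gen * bool -> seq fletter) (w : kword).
Hypothesis comp_small : forall g, (size (comp g) <= 1)%N.
Local Notation n := (size w).
Local Notation V := (rsuffix comp w).
Local Notation letter k := (nth (gx1, true) w k).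
Local Notation cplx := (R * R)%type.
Implicit Types (r s t th : R) (k : nat).

Definition height k : R := (size (V k))%:R.

(* One of [V k] and [V k.+1] extends the other by a letter (rsuffix_step). *)
Definition longer_rsuffix k := if (size (V k) <= size (V k.+1))%N then V k.+1 else V k.

Definition node_walk k r : cplx := walk (V k) (r * height k).

Definition edge_walk k th r : cplx :=
  walk (longer_rsuffix k) (r * (height k + th * (height k.+1 - height k))).

(* On [k/n, (k+1)/n] the sum telescopes to [- edge_walk k _ (1 - t)] (contractionE);
   the clamped form makes continuity evident. *)
Definition contraction (z : R * R) : cplx :=
  - \sum_(k < n) (edge_walk k (clamp01 (n%:R * z.1 - k%:R)) (1 - z.2) - node_walk k (1 - z.2)).

Definition image_path s : cplx :=
  \sum_(k < n) clamp01 (n%:R * s - k%:R) *: wvec R (comp (letter k)).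

Lemma edge_walk0 k r : (k < n)%N -> 0 <= r <= 1 -> edge_walk k 0 r = node_walk k r.
Proof.
move=> lt_k /andP[_ r_le1]; rewrite /edge_walk /node_walk /longer_rsuffix mul0r addr0.
have h_ge0 : 0 <= height k by rewrite /height.
case: (rsuffix_step comp_small lt_k) => [[_ ->]|[l [_ ->]]|[l [_ ->]]] /=.
- by rewrite leqnn.
- by rewrite leqnSn walk_cons_low // /height ler_piMl.
- by rewrite ltnn.
Qed.

Lemma edge_walk1 k r : (k < n)%N -> 0 <= r <= 1 -> edge_walk k 1 r = node_walk k.+1 r.
Proof.
move=> lt_k /andP[_ r_le1]; rewrite /edge_walk /node_walk /longer_rsuffix mul1r addrC subrK.
case: (rsuffix_step comp_small lt_k) => [[_ ->]|[l [_ ->]]|[l [_ ->]]] /=.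
- by rewrite leqnn.
- by rewrite leqnSn.
- by rewrite ltnn walk_cons_low // /height ler_piMl.
Qed.

Lemma edge_walk_full k th : (k < n)%N -> 0 <= th <= 1 ->
  edge_walk k th 1 - node_walk k 1 = - (th *: wvec R (comp (letter k))).
Proof.
move=> lt_k th01; rewrite /edge_walk /node_walk /longer_rsuffix /height !mul1r.
case: (rsuffix_step comp_small lt_k) => [[-> ->]|[l [-> ->]]|[l [-> ->]]] /=.
- by rewrite leqnn subrr mulr0 addr0 subrr /wvec big_nil scaler0 oppr0.
- rewrite leqnSn -natr1 [_ + 1]addrC addrK mulr1 walk_cons // walk_full //.
  by rewrite lvec_finv scalerN addrAC subrr add0r /wvec big_seq1.
- move: th01 => /andP[th_ge0 th_le1]; rewrite ltnn -natr1; set h := (size _)%:R.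
  have -> : h + 1 + th * (h - (h + 1)) = h + (1 - th) by ring.
  rewrite walk_cons ?walk_full ?lerDl ?subr_ge0 ?gerBl ?th_le1 ?th_ge0 //.
  rewrite [h + 1 - h]addrAC subrr add0r.
  rewrite clamp01_id ?ler01 ?lexx // scale1r scalerBl scale1r opprD addrACA subrr add0r.
  by rewrite addrAC subrr add0r /wvec big_seq1.
Qed.

Lemma contraction_t0 s : contraction (s, 0) = image_path s.
Proof.
rewrite /contraction /image_path subr0 -sumrN; apply: eq_bigr => k _.
by rewrite edge_walk_full ?opprK ?clamp01_itv.
Qed.

Lemma contraction_t1 s : contraction (s, 1) = 0.
Proof.
rewrite /contraction subrr big1 ?oppr0 // => k _.
by rewrite /edge_walk /node_walk !mul0r !walk_le0 ?subrr.
Qed.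

Lemma continuous_contraction : continuous contraction.
Proof.
move=> z; apply: cvgN; apply: (continuous_big add_continuous) => k _ {}z.
have r_cont : continuous (fun y : R * R => 1 - y.2).
  by move=> y; apply: cvgB; [exact: cvg_cst | exact: cvg_snd].
have node_cont : continuous (fun y : R * R => (1 - y.2) * height k).
  by move=> y; apply: cvgM; [exact: r_cont | exact: cvg_cst].
have edge_cont : continuous (fun y : R * R =>
    (1 - y.2) * (height k + clamp01 (n%:R * y.1 - k%:R) * (height k.+1 - height k))).
  move=> y; apply: cvgM; first exact: r_cont.
  apply: cvgD; first exact: cvg_cst.
  apply: cvgM; last exact: cvg_cst.
  apply: (continuous_clamp01 (f := fun y : R * R => n%:R * y.1 - k%:R)) => {}y.
  apply: cvgB; last exact: cvg_cst.
  by apply: cvgM; [exact: cvg_cst | exact: cvg_fst].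
by apply: cvgB; [exact: continuous_walk edge_cont z | exact: continuous_walk node_cont z].
Qed.

Hypothesis w_trivial : freduce (word_image comp w) = [::].

Lemma contractionE k0 s t : (k0 < n)%N -> k0%:R <= n%:R * s <= k0.+1%:R -> 0 <= t <= 1 ->
  contraction (s, t) = - edge_walk k0 (n%:R * s - k0%:R) (1 - t).
Proof.
move=> lt_k0 ns_itv /andP[t_ge0 t_le1]; have r01 : 0 <= 1 - t <= 1 by apply/andP; lra.
rewrite /contraction /= (telescope_clamp01 (f := fun k th => edge_walk k th (1 - t))
  (p := fun k => node_walk k (1 - t)) lt_k0 ns_itv).
- by rewrite /node_walk rsuffix0 // subr0.
- by move=> k lt_k; rewrite edge_walk0.
- by move=> k lt_k; rewrite edge_walk1.
Qed.

Lemma contraction_size0 z : n = 0%N -> contraction z = 0.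
Proof. by rewrite /contraction; case: (size w) => // _; rewrite big_ord0 oppr0. Qed.

Lemma contraction_s0 t : 0 <= t <= 1 -> contraction (0, t) = 0.
Proof.
move=> t01; have [n0|n_gt0] := posnP n; first exact: contraction_size0.
rewrite (@contractionE 0) ?mulr0 ?subrr ?edge_walk0 ?lexx ?ler01 //.
  by rewrite /node_walk rsuffix0 // oppr0.
by move: t01 => /andP[? ?]; apply/andP; lra.
Qed.

Lemma contraction_s1 t : 0 <= t <= 1 -> contraction (1, t) = 0.
Proof.
move=> t01; have [n0|n_gt0] := posnP n; first exact: contraction_size0.
have lt_n1 : (n.-1 < n)%N by rewrite prednK.
have n1S : n.-1.+1%:R = n%:R :> R by rewrite prednK.
rewrite (@contractionE n.-1) ?mulr1 ?n1S ?lexx ?ler_nat ?leq_pred //.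
rewrite -n1S -natr1 [_ + 1]addrC addrK edge_walk1 //; last first.
  by move: t01 => /andP[? ?]; apply/andP; lra.
by rewrite prednK // /node_walk rsuffix_size_end oppr0.
Qed.

Lemma norm_edge_walk k th r : 0 <= th <= 1 -> 0 <= r <= 1 ->
  2 * `|edge_walk k th r| <= n%:R.
Proof.
move=> /andP[th_ge0 th_le1] /andP[r_ge0 r_le1].
have height_le j : 2 * height j <= n%:R.
  by rewrite /height -natrM ler_nat size_rsuffix.
have height_ge0 j : 0 <= height j by rewrite /height.
have := height_le k; have := height_le k.+1; have := height_ge0 k; have := height_ge0 k.+1.
rewrite /edge_walk; move: (height k) (height k.+1) => h0 h1 h1_ge0 h0_ge0 h1_le h0_le.
have h_ge0 : 0 <= h0 + th * (h1 - h0) by nra.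
have h_le : 2 * (h0 + th * (h1 - h0)) <= n%:R by nra.
have := norm_walk (longer_rsuffix k) (mulr_ge0 r_ge0 h_ge0); nra.
Qed.

Lemma contraction_edge s t : 0 <= s <= 1 -> 0 <= t <= 1 -> (0 < n)%N ->
  exists k th, 0 <= th <= 1 /\ contraction (s, t) = - edge_walk k th (1 - t).
Proof.
move=> /andP[s_ge0 s_le1] t01 n_gt0.
have [|k le_k /[dup] ns_itv /andP[k_le k_ge]] := @unit_segment_cover R (n%:R * s) n.-1.
  by rewrite prednK // mulr_ge0 //= ler_piMr.
rewrite -ltnS prednK // in le_k.
exists k, (n%:R * s - k%:R); split; last exact: contractionE.
by rewrite subr_ge0 k_le lerBlDl natr1.
Qed.

Lemma contraction_on_grid s t : 0 <= s <= 1 -> 0 <= t <= 1 -> on_grid (contraction (s, t)).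
Proof.
move=> s01 t01; have [n0|n_gt0] := posnP n.
  by rewrite contraction_size0 //; left; rewrite rpred0.
by have [k [th [_ ->]]] := contraction_edge s01 t01 n_gt0; apply/on_gridN/walk_on_grid.
Qed.

Lemma norm_contraction s t : 0 <= s <= 1 -> 0 <= t <= 1 -> 2 * `|contraction (s, t)| <= n%:R.
Proof.
move=> s01 t01; have [n0|n_gt0] := posnP n; first by rewrite contraction_size0 // normr0 mulr0.
have [k [th [th01 ->]]] := contraction_edge s01 t01 n_gt0.
by rewrite normrN norm_edge_walk //; move: t01 => /andP[? ?]; apply/andP; lra.
Qed.

End Contraction.

Section Loops.
Variable R : realType.
Local Notation cplx := (R * R)%type.
Local Notation letter w k := (nth (gx1, true) w k).

Lemma step_xE g : step_x R g = wvec R (comp_a g).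
Proof.
by case: g => [[] []]; apply: injective_projections;
  rewrite /wvec /= ?big_nil ?big_seq1 /lvec /axis /= ?(scale1r, scaleN1r, scaler0, oppr0).
Qed.

Lemma step_yE g : step_y R g = - wvec R (comp_b g).
Proof.
by case: g => [[] []]; apply: injective_projections;
  rewrite /wvec /= ?big_nil ?big_seq1 /lvec /axis /= ?(scale1r, scaleN1r, scaler0, oppr0).
Qed.

Lemma wvec_comp_abc g : wvec R (comp_a g) + wvec R (comp_b g) + wvec R (comp_c g) = 0.
Proof.
by case: g => [[] []]; apply: injective_projections;
  rewrite /wvec /= ?big_nil ?big_seq1 /lvec /axis /=
    ?(scale1r, scaleN1r, scaler0, oppr0, addr0, add0r, subrr, addNr).
Qed.

Lemma pl_pathE (step : gen * bool -> cplx) w (z0 : cplx) (s : R) : pl_path step w z0 s =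
  z0 + \sum_(k < size w) clamp01 ((size w)%:R * s - k%:R) *: step (letter w k).
Proof. by apply: injective_projections; rewrite /= ?(raddf_sum fst) ?(raddf_sum snd). Qed.

Lemma gamma_xE w px (s : R) : gamma_x w px s = hat_x R px + image_path comp_a w s.
Proof.
by rewrite /gamma_x pl_pathE; congr (_ + _); apply: eq_bigr => k _; rewrite step_xE.
Qed.

Lemma gamma_yE w py (s : R) : gamma_y w py s = hat_y R py - image_path comp_b w s.
Proof.
rewrite /gamma_y pl_pathE /image_path -sumrN; congr (_ + _); apply: eq_bigr => k _.
by rewrite step_yE scalerN.
Qed.

Lemma image_path_abc w (s : R) :
  image_path comp_a w s + image_path comp_b w s + image_path comp_c w s = 0 :> cplx.
Proof.
rewrite /image_path -!big_split big1 // => k _ /=.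
by rewrite -!scalerDr wvec_comp_abc scaler0.
Qed.

End Loops.

Section Assembly.
Variable R : realType.
Local Notation cplx := (R * R)%type.
Implicit Types (z u d : cplx) (p px py : gauss).

Definition rel_null_homotopy (F : R * R -> cplx) := [/\ continuous F,
  forall s, F (s, 1) = 0 & forall t, I01 t -> F (0, t) = 0 /\ F (1, t) = 0].

Lemma rel_null_homotopyD F G : rel_null_homotopy F -> rel_null_homotopy G ->
  rel_null_homotopy (fun z => F z + G z).
Proof.
move=> [F_cont F1 F01] [G_cont G1 G01]; split.
- by move=> z; apply: cvgD; [exact: F_cont | exact: G_cont].
- by move=> s; rewrite F1 G1 addr0.
- by move=> t /[dup] /F01[-> ->] /G01[-> ->]; rewrite addr0.
Qed.

Lemma rel_null_homotopyN F : rel_null_homotopy F -> rel_null_homotopy (fun z => - F z).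
Proof.
move=> [F_cont F1 F01]; split.
- by move=> z; apply: cvgN; exact: F_cont.
- by move=> s; rewrite F1 oppr0.
- by move=> t /F01[-> ->]; rewrite oppr0.
Qed.

Lemma contraction_rel_null comp w : (forall g, (size (comp g) <= 1)%N) ->
  freduce (word_image comp w) = [::] -> rel_null_homotopy (@contraction R comp w).
Proof.
move=> comp_small w_trivial; split.
- exact: continuous_contraction.
- exact: contraction_t1.
- by move=> t t01; rewrite contraction_s0 ?contraction_s1.
Qed.

Lemma I_trivial_of_rel_null w px py (F G : R * R -> cplx) :
  rel_null_homotopy F -> rel_null_homotopy G ->
  (forall s, gamma_x w px s = hat_x R px + F (s, 0)) ->
  (forall s, gamma_y w py s = hat_y R py + G (s, 0)) ->
  (forall s t, I01 s -> I01 t -> conf2_punct (hat_x R px + F (s, t), hat_y R py + G (s, t))) ->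
  I_trivial R w px py.
Proof.
move=> [F_cont F1 F01] [G_cont G1 G01] Fx Gy conf.
exists (fun z => (hat_x R px + F z, hat_y R py + G z)); split => //.
- have X_cont : continuous (fun z => hat_x R px + F z).
    by move=> z; apply: cvgD; [exact: cvg_cst | exact: F_cont].
  have Y_cont : continuous (fun z => hat_y R py + G z).
    by move=> z; apply: cvgD; [exact: cvg_cst | exact: G_cont].
  by apply: continuous_subspaceT => z; exact: cvg_pair (X_cont z) (Y_cont z).
- by move=> s _; rewrite /loop_xy Fx Gy F1 G1 !addr0.
- by move=> t /[dup] /F01[-> ->] /G01[-> ->]; rewrite !addr0.
Qed.

Definition gauss_pt p : cplx := (p.1%:~R, p.2%:~R).

Definition third : cplx := (3^-1, 3^-1).

Lemma int_add_third_neq0 (a : R) : a \is a Num.int -> a + 3^-1 != 0.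
Proof.
move=> /intrP[m ->]; apply/eqP => e.
have : (3 * m + 1)%:~R = 3 * (m%:~R + 3^-1) :> R.
  by rewrite intrD intrM mulrDr mulfV ?pnatr_eq0.
by rewrite e mulr0 => /eqP; rewrite intr_eq0; lia.
Qed.

Lemma on_grid_add_third_neq0 z : on_grid z -> z + third != 0.
Proof.
case=> z_int; apply: contra_neq (int_add_third_neq0 z_int).
  by move/(congr1 fst).
by move/(congr1 snd).
Qed.

Lemma on_grid_sub_third_neq0 z : on_grid z -> z - third != 0.
Proof. by move/on_gridN/on_grid_add_third_neq0; rewrite -oppr_eq0 opprD opprK. Qed.

Lemma int_point_gpt p : int_point (gauss_pt p).
Proof. by split; apply: intr_int. Qed.

Lemma norm_gpt p : `|gauss_pt p| = (gauss_norm p)%:R.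
Proof. by rewrite prod_normE /= -!intr_norm -!natr_absz -natr_max. Qed.

Lemma gpt_add_neq0 p u : `|u| < (gauss_norm p)%:R -> gauss_pt p + u != 0.
Proof.
rewrite -norm_gpt => lt_u; apply/eqP => /eqP; rewrite addr_eq0 => /eqP e.
by rewrite e normrN ltxx in lt_u.
Qed.

Lemma norm_third : `|third| < 1.
Proof. by rewrite prod_normE /= maxxx ger0_norm ?invf_lt1 ?invr_ge0 ?ltr1n. Qed.

Lemma hat_x_add_neq0 px u : on_grid u -> hat_x R px + u != 0.
Proof.
move=> u_grid; rewrite (_ : hat_x R px = gauss_pt px - third) // addrAC.
exact/on_grid_sub_third_neq0/on_grid_addl/u_grid/int_point_gpt.
Qed.

Lemma hat_y_add_neq0 py u : on_grid u -> hat_y R py + u != 0.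
Proof.
move=> u_grid; rewrite (_ : hat_y R py = gauss_pt py + third) // addrAC.
exact/on_grid_add_third_neq0/on_grid_addl/u_grid/int_point_gpt.
Qed.

Lemma hat_x_add_far_neq0 (n : nat) px u :
  (n < gauss_norm px)%N -> `|u| <= n%:R -> hat_x R px + u != 0.
Proof.
move=> lt_n le_u; rewrite (_ : hat_x R px = gauss_pt px - third) // addrAC -addrA.
apply: gpt_add_neq0; move: lt_n; rewrite -(ler_nat R) -natr1 => lt_n.
have := norm_third; have := ler_normB u third; lra.
Qed.

Lemma hat_y_add_far_neq0 (n : nat) py u :
  (n < gauss_norm py)%N -> `|u| <= n%:R -> hat_y R py + u != 0.
Proof.
move=> lt_n le_u; rewrite (_ : hat_y R py = gauss_pt py + third) // addrAC -addrA.
apply: gpt_add_neq0; move: lt_n; rewrite -(ler_nat R) -natr1 => lt_n.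
have := norm_third; have := ler_normD u third; lra.
Qed.

Lemma hat_x_add_neq_hat_y px py u d : on_grid d -> hat_x R px + u != hat_y R py + (u + d).
Proof.
move=> d_grid; rewrite eq_sym -subr_eq0.
have -> : hat_y R py + (u + d) - (hat_x R px + u) = gauss_pt py - gauss_pt px + 1 + d - third.
  by apply: injective_projections => /=; field.
apply/on_grid_sub_third_neq0/on_grid_addl => //.
have int_point1 : int_point (1 : cplx) by split; apply: rpred1.
by apply/int_pointD/int_point1/int_pointD/int_pointN; apply: int_point_gpt.
Qed.

Lemma comp_small_abc : [/\ forall g, (size (comp_a g) <= 1)%N,
  forall g, (size (comp_b g) <= 1)%N & forall g, (size (comp_c g) <= 1)%N].
Proof. by split; case=> [[] ?]. Qed.

Lemma I_trivial_far_x w px py : inT w -> (size w < gauss_norm px)%N -> I_trivial R w px py.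
Proof.
move=> [_ b_triv c_triv] far_x; have [_ b_small c_small] := comp_small_abc.
pose Cb := @contraction R comp_b w; pose Cc := @contraction R comp_c w.
have Cb_null := contraction_rel_null b_small b_triv.
have Cc_null := contraction_rel_null c_small c_triv.
apply: (@I_trivial_of_rel_null _ _ _ (fun z => - (Cb z + Cc z)) (fun z => - Cb z)).
- exact/rel_null_homotopyN/rel_null_homotopyD.
- exact/rel_null_homotopyN.
- move=> s; rewrite gamma_xE /Cb /Cc (contraction_t0 _ b_small) (contraction_t0 _ c_small).
  by congr (_ + _); apply/eqP; rewrite -addr_eq0 addrA image_path_abc.
- by move=> s; rewrite gamma_yE /Cb (contraction_t0 _ b_small).
move=> s t s01 t01; split => /=; last split.
- apply: (hat_x_add_far_neq0 far_x); rewrite normrN; apply: (le_trans (ler_normD _ _)).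
  have := norm_contraction b_small b_triv s01 t01.
  have := norm_contraction c_small c_triv s01 t01; lra.
- exact/hat_y_add_neq0/on_gridN/contraction_on_grid.
- rewrite (_ : - Cb (s, t) = - (Cb (s, t) + Cc (s, t)) + Cc (s, t)); last by rewrite opprD addrNK.
  exact/hat_x_add_neq_hat_y/contraction_on_grid.
Qed.

Lemma I_trivial_far_y w px py : inT w -> (size w < gauss_norm py)%N -> I_trivial R w px py.
Proof.
move=> [a_triv _ c_triv] far_y; have [a_small _ c_small] := comp_small_abc.
pose Ca := @contraction R comp_a w; pose Cc := @contraction R comp_c w.
have Ca_null := contraction_rel_null a_small a_triv.
have Cc_null := contraction_rel_null c_small c_triv.
apply: (@I_trivial_of_rel_null _ _ _ Ca (fun z => Ca z + Cc z)) => //.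
- exact/rel_null_homotopyD.
- by move=> s; rewrite gamma_xE /Ca (contraction_t0 _ a_small).
- move=> s; rewrite gamma_yE /Ca /Cc (contraction_t0 _ a_small) (contraction_t0 _ c_small).
  by congr (_ + _); apply/eqP; rewrite eq_sym -addr_eq0 addrAC image_path_abc.
move=> s t s01 t01; split => /=; last split.
- exact/hat_x_add_neq0/contraction_on_grid.
- apply: (hat_y_add_far_neq0 far_y); apply: (le_trans (ler_normD _ _)).
  have := norm_contraction a_small a_triv s01 t01.
  have := norm_contraction c_small c_triv s01 t01; lra.
- exact/hat_x_add_neq_hat_y/contraction_on_grid.
Qed.

End Assembly.

Theorem lemma4p10 (R : realType) (w : kword) (px py : gauss) :
  inT w -> (size w < maxn (gauss_norm px) (gauss_norm py))%N -> I_trivial R w px py.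
Proof.
move=> w_in_T; rewrite leq_max => /orP[far_x | far_y].
- exact: I_trivial_far_x.
- exact: I_trivial_far_y.
Qed.
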